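(* Let $n\ge 4$ be even. Let $\mathcal V$ be a variety with ternary terms $t_0,\dots,t_n$ satisfying all the equations defining alvin terms except possibly the two equations $t_1(x,y,x)=x$ and $t_{n-1}(x,y,x)=x$. Then $\mathcal V$ is $(2n-3)$-reversed-modular. In particular every $n$-alvin variety is $(2n-3)$-reversed-modular.
   Context: Alvin terms: ternary terms $t_0,\dots,t_n$ with $t_0(x,y,z)=x$, $t_n(x,y,z)=z$, $t_h(x,y,x)=x$ for all $0\le h\le n$, $t_h(x,z,z)=t_{h+1}(x,z,z)$ for even $h$ and $t_h(x,x,z)=t_{h+1}(x,x,z)$ for odd $h$ ($0\le h<n$). A variety is $n$-alvin if it has alvin terms $t_0,\dots,t_n$. Reversed Day terms: $4$-ary terms $u_0,\dots,u_m$ with $u_k(x,y,y,x)=x$ for all $k$, $u_0(x,y,z,w)=x$, $u_m(x,y,z,w)=w$, $u_k(x,x,w,w)=u_{k+1}(x,x,w,w)$ for odd $k$ and $u_k(x,y,y,w)=u_{k+1}(x,y,y,w)$ for even $k$ ($0\le k<m$). A variety is $m$-reversed-modular if it has reversed Day terms $u_0,\dots,u_m$. *)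

From mathcomp Require Import all_boot.



Unset Printing Implicit Defensive.

Record signature := Signature {
  sym : Type;
  arity : sym -> nat
}.

Inductive term (sg : signature) (X : Type) : Type :=
| Var : X -> term sg X
| App : forall f : sym sg, ('I_(arity sg f) -> term sg X) -> term sg X.

Arguments Var {sg X} _.
Arguments App {sg X} f _.

Record algebra (sg : signature) := Algebra {
  carrier :> Type;
  interp : forall f : sym sg, ('I_(arity sg f) -> carrier) -> carrier
}.

Fixpoint eval (sg : signature) (A : algebra sg) (X : Type) (v : X -> A)
  (t : term sg X) : A :=
  match t with
  | Var x => v x
  | App f args => interp sg A f (fun i => eval sg A X v (args i))
  end.

(* A variety is the class of all models of a set of identities
   (identities are pairs of terms over countably many variables). *)
Record variety := Variety {
  vsig : signature;
  vaxioms : term vsig nat * term vsig nat -> Prop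
}.

Definition in_variety (V : variety) (A : algebra (vsig V)) : Prop :=
  forall e, vaxioms V e -> forall v : nat -> A, eval _ A nat v e.1 = eval _ A nat v e.2.

Definition op3 (sg : signature) (A : algebra sg) (t : term sg 'I_3)
  (x y z : A) : A :=
  eval sg A 'I_3 (fun i : 'I_3 => nth x [:: x; y; z] i) t.

Definition op4 (sg : signature) (A : algebra sg) (t : term sg 'I_4)
  (x y z w : A) : A :=
  eval sg A 'I_4 (fun i : 'I_4 => nth x [:: x; y; z; w] i) t.

Definition weak_alvin_terms (V : variety) (n : nat)
  (t : nat -> term (vsig V) 'I_3) : Prop :=
  forall A : algebra (vsig V), in_variety V A ->
  [/\ forall x y z : A, op3 _ A (t 0) x y z = x,
      forall x y z : A, op3 _ A (t n) x y z = z,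
      forall h, h <= n -> h != 1 -> h != n.-1 ->
        forall x y : A, op3 _ A (t h) x y x = x,
      forall h, h < n -> ~~ odd h ->
        forall x z : A, op3 _ A (t h) x z z = op3 _ A (t h.+1) x z z
    & forall h, h < n -> odd h ->
        forall x z : A, op3 _ A (t h) x x z = op3 _ A (t h.+1) x x z].

Definition alvin_terms (V : variety) (n : nat)
  (t : nat -> term (vsig V) 'I_3) : Prop :=
  forall A : algebra (vsig V), in_variety V A ->
  [/\ forall x y z : A, op3 _ A (t 0) x y z = x,
      forall x y z : A, op3 _ A (t n) x y z = z,
      forall h, h <= n -> forall x y : A, op3 _ A (t h) x y x = x,
      forall h, h < n -> ~~ odd h ->
        forall x z : A, op3 _ A (t h) x z z = op3 _ A (t h.+1) x z z
    & forall h, h < n -> odd h ->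
        forall x z : A, op3 _ A (t h) x x z = op3 _ A (t h.+1) x x z].

Definition n_alvin (V : variety) (n : nat) : Prop :=
  exists t : nat -> term (vsig V) 'I_3, alvin_terms V n t.

Definition reversed_day_terms (V : variety) (m : nat)
  (u : nat -> term (vsig V) 'I_4) : Prop :=
  forall A : algebra (vsig V), in_variety V A ->
  [/\ forall k, k <= m -> forall x y : A, op4 _ A (u k) x y y x = x,
      forall x y z w : A, op4 _ A (u 0) x y z w = x,
      forall x y z w : A, op4 _ A (u m) x y z w = w,
      forall k, k < m -> odd k ->
        forall x w : A, op4 _ A (u k) x x w w = op4 _ A (u k.+1) x x w w
    & forall k, k < m -> ~~ odd k ->
        forall x y w : A, op4 _ A (u k) x y y w = op4 _ A (u k.+1) x y y w].

Definition reversed_modular (V : variety) (m : nat) : Prop :=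
  exists u : nat -> term (vsig V) 'I_4, reversed_day_terms V m u.

From mathcomp Require Import all_boot.
From mathcomp Require Import zify.
From Stdlib Require Import FunctionalExtensionality.

(* The reversed
   Day sequence u_0, ..., u_(2n-3) is
     u_0 = x,   u_1 = t_1(x,y,z),   u_(2n-4) = t_(n-1)(y,z,w),   u_(2n-3) = w,
   and, for 2 <= h <= n-2, the two consecutive terms u_(2h-2), u_(2h-1) are
   t_h(x,_,w) with y and z placed (in some order) in the middle argument. *)

Section DaySequence.

Variables (A : Type) (n : nat) (t : nat -> A -> A -> A -> A).

Definition dayop (k : nat) (x y z w : A) : A :=
  if k == 0 then x
  else if k == 1 then t 1 x y z
  else if k < 2 * n - 4 then
    t k./2.+1 x (if odd k./2.+1 == odd k then y else z) w
  else if k == 2 * n - 4 then t n.-1 y z w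
  else w.

Hypotheses (n_ge4 : 4 <= n) (n_even : ~~ odd n).
Hypothesis t_first : forall x y z, t 0 x y z = x.
Hypothesis t_last : forall x y z, t n x y z = z.
Hypothesis t_idem :
  forall h, h <= n -> h != 1 -> h != n.-1 -> forall x y, t h x y x = x.
Hypothesis t_even :
  forall h, h < n -> ~~ odd h -> forall x z, t h x z z = t h.+1 x z z.
Hypothesis t_odd :
  forall h, h < n -> odd h -> forall x z, t h x x z = t h.+1 x x z.

Lemma t1_xyy (x y : A) : t 1 x y y = x.
Proof. by rewrite -t_even ?t_first //; lia. Qed.

Lemma tpred_xxz (x z : A) : t n.-1 x x z = z.
Proof.
have pred_odd : odd n.-1 by lia.
by rewrite t_odd // ?prednK ?t_last //; lia.
Qed.

Lemma dayop_mid k x y z w : 1 < k < 2 * n - 4 ->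
  dayop k x y z w = t k./2.+1 x (if odd k./2.+1 == odd k then y else z) w.
Proof.
move=> /andP[k_gt1 k_lt].
by rewrite /dayop ifN; [rewrite ifN; [rewrite k_lt | lia] | lia].
Qed.

Lemma dayop_penult x y z w : dayop (2 * n - 4) x y z w = t n.-1 y z w.
Proof. by rewrite /dayop eqxx ltnn ifN ?ifN //; lia. Qed.

Lemma dayop_tail k x y z w : 2 * n - 3 <= k -> dayop k x y z w = w.
Proof. by move=> k_ge; rewrite /dayop !ifN //; lia. Qed.

(* u_k(x,y,y,x) = x for k <= 2n-3; in the middle range the index h of the
   operation lies in [2, n-2], where idempotence of t_h is available. *)
Lemma dayop_idem k x y : k <= 2 * n - 3 -> dayop k x y y x = x.
Proof.
move=> k_le; have [->|k_ne0] := eqVneq k 0; first by [].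
have [->|k_ne1] := eqVneq k 1; first by rewrite /dayop t1_xyy.
have [->|k_nepen] := eqVneq k (2 * n - 4); first by rewrite dayop_penult tpred_xxz.
have [k_tail|k_mid] := leqP (2 * n - 3) k; first by rewrite dayop_tail.
by rewrite dayop_mid; [rewrite if_same t_idem //; lia | lia].
Qed.

(* For odd k, u_k and u_(k+1) are joined by the alvin link between t_h and
   t_(h+1) for h = (k+1)/2; the middle arguments were placed so that the
   link applies: t_h(x,x,w) = t_(h+1)(x,x,w) for odd h, and
   t_h(x,w,w) = t_(h+1)(x,w,w) for even h. *)
Lemma dayop_odd_link k x w : k < 2 * n - 3 -> odd k ->
  dayop k x x w w = dayop k.+1 x x w w.
Proof.
move=> k_lt k_odd.
have [->|k_ne1] := eqVneq k 1.
  rewrite (dayop_mid 2) /=; last by lia.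
  by rewrite /dayop /= t_odd //; lia.
have k_mid : 1 < k < 2 * n - 4 by lia.
have half_succ : (k.+1)./2 = k./2.+1 by lia.
have [k_pen|k1_mid] := eqVneq k.+1 (2 * n - 4).
  have h_eq : k./2.+1 = n.-2 by lia.
  rewrite k_pen dayop_penult dayop_mid // h_eq.
  rewrite ifN; last by apply/negbT; lia.
  rewrite t_even; [by congr (t _ x w w); lia | lia | lia].
rewrite dayop_mid // dayop_mid; last by lia.
rewrite half_succ !oddS k_odd /=.
case h_odd: (odd k./2) => /=.
  by rewrite t_even //; [lia | rewrite oddS h_odd].
by rewrite t_odd //; [lia | rewrite oddS h_odd].
Qed.

(* For even k, u_k and u_(k+1) agree on (x,y,y,w): both use the same t_h
   and differ only by swapping the (now equal) arguments y and z, except at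
   the two ends where t_1(x,y,y) = x and t_(n-1)(y,y,w) = w are used. *)
Lemma dayop_even_link k x y w : k < 2 * n - 3 -> ~~ odd k ->
  dayop k x y y w = dayop k.+1 x y y w.
Proof.
move=> k_lt k_even.
have [->|k_ne0] := eqVneq k 0; first by rewrite /dayop /= t1_xyy.
have [->|k_nepen] := eqVneq k (2 * n - 4).
  by rewrite dayop_penult tpred_xxz dayop_tail //; lia.
have half_succ : (k.+1)./2 = k./2 by lia.
rewrite dayop_mid; last by lia.
by rewrite dayop_mid; [rewrite half_succ !if_same | lia].
Qed.

End DaySequence.

Arguments dayop {A} n t k x y z w.

Lemma dayop_natural (A B : Type) (f : A -> B) n
    (tA : nat -> A -> A -> A -> A) (tB : nat -> B -> B -> B -> B) :
  (forall h a b c, f (tA h a b c) = tB h (f a) (f b) (f c)) ->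
  forall k x y z w,
    f (dayop n tA k x y z w) = dayop n tB k (f x) (f y) (f z) (f w).
Proof.
move=> f_morph k x y z w.
by rewrite /dayop !(fun_if f) !f_morph (fun_if f).
Qed.

Fixpoint subst (sg : signature) (X Y : Type) (s : X -> term sg Y)
    (u : term sg X) : term sg Y :=
  match u with
  | Var x => s x
  | App f args => App f (fun i => subst sg X Y s (args i))
  end.

Lemma eval_subst (sg : signature) (A : algebra sg) (X Y : Type)
    (s : X -> term sg Y) (v : Y -> A) (u : term sg X) :
  eval sg A Y v (subst sg X Y s u) = eval sg A X (fun x => eval sg A Y v (s x)) u.
Proof.
elim: u => [x|f args IH] //=.
by congr (interp _ _ _); apply: functional_extensionality => i; exact: IH.
Qed.

Definition apply3 (sg : signature) (u : term sg 'I_3) (a b c : term sg 'I_4)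
  : term sg 'I_4 :=
  subst sg 'I_3 'I_4 (fun i => nth a [:: a; b; c] i) u.

Lemma eval_apply3 (sg : signature) (A : algebra sg) (v : 'I_4 -> A)
    (u : term sg 'I_3) (a b c : term sg 'I_4) :
  eval sg A 'I_4 v (apply3 sg u a b c) =
  op3 sg A u (eval sg A 'I_4 v a) (eval sg A 'I_4 v b) (eval sg A 'I_4 v c).
Proof.
rewrite /apply3 /op3 eval_subst; congr (eval _ _ _ _ _).
by apply: functional_extensionality => -[[|[|[|i]]] ?].
Qed.

Definition day_terms (sg : signature) (n : nat) (t : nat -> term sg 'I_3)
    (k : nat) : term sg 'I_4 :=
  dayop n (fun h => apply3 sg (t h)) k
    (Var ord0) (Var (@Ordinal 4 1 isT)) (Var (@Ordinal 4 2 isT)) (Var ord_max).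

Lemma op4_day_terms (sg : signature) (A : algebra sg) n t k (x y z w : A) :
  op4 sg A (day_terms sg n t k) x y z w =
  dayop n (fun h => op3 sg A (t h)) k x y z w.
Proof.
rewrite /op4 /day_terms; apply: dayop_natural => h a b c; exact: eval_apply3.
Qed.

Lemma alvin_weak (V : variety) n (t : nat -> term (vsig V) 'I_3) :
  alvin_terms V n t -> weak_alvin_terms V n t.
Proof.
move=> alvin A A_in; have [? ? idem ? ?] := alvin A A_in.
by split=> // h h_le _ _; exact: idem.
Qed.

Theorem lemma4p2 (V : variety) (n : nat) (Hn : 4 <= n) (Hev : ~~ odd n) :
  (forall t : nat -> term (vsig V) 'I_3,
      weak_alvin_terms V n t -> reversed_modular V (2 * n - 3))
  /\ (n_alvin V n -> reversed_modular V (2 * n - 3)).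
Proof.
have weak t : weak_alvin_terms V n t -> reversed_modular V (2 * n - 3).
  move=> walvin; exists (day_terms _ n t) => A A_in.
  have [t_first t_last t_idem t_even t_odd] := walvin A A_in.
  split=> [k k_le x y|x y z w|x y z w|k k_lt k_odd x w|k k_lt k_even x y w];
    rewrite !op4_day_terms.
  - exact: dayop_idem.
  - by [].
  - exact: dayop_tail.
  - exact: dayop_odd_link.
  - exact: dayop_even_link.
split; first exact: weak.
by move=> [t /alvin_weak]; exact: weak.
Qed.
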